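(* Let $p>1$ and let ${\bf a}=(a_n)_{n\in\mathbb N}$ be a good weight for the dominated weighted ergodic theorem in $L^p$. Then the Nörlund matrix $N_{\bf a}$ is bounded on $\ell^p(\mathbb N)$. Moreover, for every non-increasing sequence $(b_n)_{n\in\mathbb N}$ of nonnegative numbers, with ${\bf c}:=(a_nb_n)_{n\in\mathbb N}$, the Nörlund matrix $N_{\bf c}$ is bounded on $\ell^p(\mathbb N)$.
   Context: For a complex sequence ${\bf a}=(a_n)_{n\in\mathbb N}$ set $A_i:=\sum_{k=0}^i|a_k|$. The Nörlund matrix $N_{\bf a}=(a_{ij})_{i,j\in\mathbb N}$ has entries $a_{ij}=a_{i-j}/A_i$ if $0\le j\le i$ and $A_i>0$, and $a_{ij}=0$ if $j>i$ or $A_i=0$; it is bounded on $\ell^p(\mathbb N)$ if there is $C_p$ with $\|N_{\bf a}u\|_{\ell^p}\le C_p\|u\|_{\ell^p}$ for all finitely supported $u$. (For ${\bf c}$, $A_i$ is replaced by $\sum_{k=0}^i|c_k|$.) The sequence ${\bf a}$ is a good weight for the dominated weighted ergodic theorem in $L^p$ if there is $C>0$ such that for every probability-measure-preserving system $(X,\Sigma,\nu,\tau)$ and every $f\in L^p(\nu)$, $\|\sup_{n\ge0}\frac1{A_n}|\sum_{k=0}^na_kf\circ\tau^k|\|_{L^p(\nu)}\le C\|f\|_{L^p(\nu)}$, with the quotient read as $0$ when $A_n=0$. *)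

From HB Require Import structures.
From mathcomp Require Import all_boot all_order all_algebra.
From mathcomp Require Import all_classical all_reals all_analysis.
From mathcomp Require Import complex.
Set Implicit Arguments. Unset Strict Implicit. Unset Printing Implicit Defensive.
Import Order.TTheory GRing.Theory Num.Theory.
Local Open Scope ring_scope.
Local Open Scope classical_set_scope.
Local Open Scope complex_scope.

Definition cmod {R : realType} (z : R[i]) : R := Normc.normc z.

Definition Apart {R : realType} (a : nat -> R[i]) (i : nat) : R :=
  \sum_(k < i.+1) cmod (a k).

Definition norlund {R : realType} (a : nat -> R[i]) (u : nat -> R[i])
    (i : nat) : R[i] :=
  if Apart a i == 0 then 0
  else (\sum_(j < i.+1) a (i - j)%N * u j) / (Apart a i)%:C.

Definition lpnorm {R : realType} (p : R) (u : nat -> R[i]) : \bar R :=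
  Lnorm (@counting nat R) p%:E (fun i => (cmod (u i))%:E).

Definition finitely_supported {R : realType} (u : nat -> R[i]) : Prop :=
  exists N : nat, forall n : nat, (N <= n)%N -> u n = 0.

Definition norlund_bounded {R : realType} (p : R) (a : nat -> R[i]) : Prop :=
  exists C : R, forall u : nat -> R[i], finitely_supported u ->
    (lpnorm p (norlund a u) <= C%:E * lpnorm p u)%E.

Definition measure_preserving {d} {T : measurableType d} {R : realType}
    (nu : probability T R) (tau : T -> T) : Prop :=
  measurable_fun [set: T] tau /\
  forall A : set T, measurable A -> nu (tau @^-1` A) = nu A.

Definition cmeasurable {d} {T : measurableType d} {R : realType}
    (f : T -> R[i]) : Prop :=
  measurable_fun [set: T] (fun x => complex.Re (f x)) /\
  measurable_fun [set: T] (fun x => complex.Im (f x)).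

Definition in_Lp {d} {T : measurableType d} {R : realType}
    (nu : probability T R) (p : R) (f : T -> R[i]) : Prop :=
  cmeasurable f /\ (Lnorm nu p%:E (fun x => (cmod (f x))%:E) < +oo)%E.

Definition wavg {T : Type} {R : realType} (a : nat -> R[i]) (f : T -> R[i])
    (tau : T -> T) (n : nat) (x : T) : R :=
  if Apart a n == 0 then 0
  else cmod (\sum_(k < n.+1) a k * f (iter k tau x)) / Apart a n.

Definition maxfun {T : Type} {R : realType} (a : nat -> R[i]) (f : T -> R[i])
    (tau : T -> T) (x : T) : \bar R :=
  ereal_sup (range (fun n : nat => (wavg a f tau n x)%:E)).

Definition good_weight {R : realType} (p : R) (a : nat -> R[i]) : Prop :=
  exists C : R, 0 < C /\
    forall (d : measure_display) (T : measurableType d)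
           (nu : probability T R) (tau : T -> T),
      measure_preserving nu tau ->
      forall f : T -> R[i], in_Lp nu p f ->
        (Lnorm nu p%:E (maxfun a f tau)
           <= C%:E * Lnorm nu p%:E (fun x => (cmod (f x))%:E))%E.

From HB Require Import structures.
From mathcomp Require Import all_boot all_order all_algebra.
From mathcomp Require Import all_classical all_reals all_analysis.
From mathcomp Require Import complex ring.
Set Implicit Arguments.
Unset Strict Implicit.
Unset Printing Implicit Defensive.

Import Order.TTheory GRing.Theory Num.Theory.
Local Open Scope ring_scope.
Local Open Scope complex_scope.

(* Transference.  On {0, ..., M} with the uniform probability, let tau be the
   cyclic rotation x |-> x - 1.  For 0 <= n <= i the orbit sum
   sum_{k <= n} a_k u(tau^k i) is sum_{k <= n} a_k u_{i-k}, so the maximal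
   function of u at i dominates every |(N_a u)_i|; by Abel summation against
   the non-increasing b it also dominates |(N_c u)_i|.  The maximal inequality
   in L^p of this system thus bounds the l^p norm of (N_c u)_0, ..., (N_c u)_M
   by C times that of u_0, ..., u_M, uniformly in M. *)

Section ComplexModulus.
Context {R : realType}.
Implicit Types z w : R[i].

Lemma cmod_ge0 z : 0 <= cmod z.
Proof. by case: z => x y; rewrite /cmod /= sqrtr_ge0. Qed.

Lemma cmod0 : cmod (0 : R[i]) = 0.
Proof. exact: Normc.normc0. Qed.

Lemma cmod0_eq0 z : cmod z = 0 -> z = 0.
Proof. exact: Normc.eq0_normc. Qed.

Lemma cmodM z w : cmod (z * w) = cmod z * cmod w.
Proof. exact: Normc.normcM. Qed.

Lemma cmodV z : cmod z^-1 = (cmod z)^-1.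
Proof. exact: Normc.normcV. Qed.

Lemma ger0_cmodC (r : R) : 0 <= r -> cmod r%:C = r.
Proof. by move=> r0; rewrite /cmod /= expr0n /= addr0 sqrtr_sqr ger0_norm. Qed.

Lemma ler_cmodD z w : cmod (z + w) <= cmod z + cmod w.
Proof. exact: le_normcD. Qed.

Lemma ler_cmod_sum n (F : 'I_n -> R[i]) :
  cmod (\sum_(k < n) F k) <= \sum_(k < n) cmod (F k).
Proof.
elim/big_ind2: _ => [|z1 z2 r1 r2 h1 h2|//]; first by rewrite cmod0.
by apply: le_trans (ler_cmodD _ _) _; exact: lerD.
Qed.

Lemma Apart_ge0 (a : nat -> R[i]) n : 0 <= Apart a n.
Proof. by apply: sumr_ge0 => k _; exact: cmod_ge0. Qed.

Lemma Apart_eq0 (a : nat -> R[i]) n k :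
  Apart a n = 0 -> (k <= n)%N -> a k = 0.
Proof.
move=> A0 kn; apply: cmod0_eq0.
exact: (psumr_eq0P (fun j _ => cmod_ge0 _) A0 (i := Ordinal (kn : k < n.+1)%N)).
Qed.

End ComplexModulus.

Lemma abel_summation (V : comPzRingType) (x b : nat -> V) n :
  \sum_(k < n.+1) x k * b k =
  b n * \sum_(k < n.+1) x k + \sum_(k < n) (b k - b k.+1) * \sum_(j < k.+1) x j.
Proof.
elim: n => [|n IH]; first by rewrite big_ord0 !big_ord1 addr0 mulrC.
rewrite big_ord_recr /= IH [in RHS]big_ord_recr /= [X in _ = _ + X]big_ord_recr /=.
ring.
Qed.

Lemma abel_majorization {R : realType} (x : nat -> R[i]) (alpha b : nat -> R)
    (m : R) n :
  (forall k, 0 <= b k) -> (forall k, b k.+1 <= b k) ->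
  (forall k, (k <= n)%N ->
     cmod (\sum_(j < k.+1) x j) <= m * \sum_(j < k.+1) alpha j) ->
  cmod (\sum_(k < n.+1) x k * (b k)%:C) <= m * \sum_(k < n.+1) alpha k * b k.
Proof.
move=> b0 bdec Hx.
rewrite (abel_summation alpha b) (abel_summation x (fun k => (b k)%:C)) mulrDr.
apply: le_trans (ler_cmodD _ _) _; apply: lerD.
  by rewrite cmodM ger0_cmodC // mulrCA ler_wpM2l // Hx.
rewrite mulr_sumr; apply: le_trans (ler_cmod_sum _) _; apply: ler_sum => k _.
have bk0 : 0 <= b k - b k.+1 by rewrite subr_ge0.
rewrite -rmorphB /= cmodM ger0_cmodC // mulrCA ler_wpM2l // Hx //.
exact: ltnW.
Qed.

Section WeightedAverages.
Context {R : realType} {T : Type} (a : nat -> R[i]) (f : T -> R[i]) (tau : T -> T).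

Lemma wavg_ge0 n x : 0 <= wavg a f tau n x.
Proof.
rewrite /wavg; case: ifPn => // _.
by rewrite divr_ge0 ?cmod_ge0 ?Apart_ge0.
Qed.

Lemma wavg_le_maxfun n x : ((wavg a f tau n x)%:E <= maxfun a f tau x)%E.
Proof. by apply: ereal_sup_ubound; exists n. Qed.

Lemma maxfun_ge0 x : (0 <= maxfun a f tau x)%E.
Proof. by apply: le_trans (wavg_le_maxfun 0 x); rewrite lee_fin wavg_ge0. Qed.

Lemma cmod_orbit_sum_le n x m : wavg a f tau n x <= m ->
  cmod (\sum_(k < n.+1) a k * f (iter k tau x)) <= m * Apart a n.
Proof.
rewrite /wavg; case: ifPn => [/eqP A0 _ | An].
  rewrite big1 ?cmod0 ?A0 ?mulr0 // => k _.
  by rewrite (Apart_eq0 A0) ?mul0r // -ltnS.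
have Apos : 0 < Apart a n by rewrite lt_neqAle eq_sym An Apart_ge0.
by rewrite ler_pdivrMr.
Qed.

End WeightedAverages.

Section UniformProbability.
Context {R : realType} (M : nat).
Local Open Scope ereal_scope.

Let invM_ge0 : (0 <= M.+1%:R^-1 :> R)%R.
Proof. by rewrite invr_ge0. Qed.

Definition unif_nat :=
  mscale (NngNum invM_ge0) (msum (fun k => @dirac _ nat k R) M.+1).

Lemma unif_natE (A : set nat) :
  unif_nat A = (M.+1%:R^-1)%:E * \sum_(k < M.+1) \d_(k : nat) A.
Proof. by []. Qed.

Let unif_natT : unif_nat setT = 1.
Proof.
rewrite unif_natE (eq_bigr (fun=> 1%E)); last by move=> k _; rewrite diracT.
by rewrite sumEFin /= sumr_const card_ord -EFinM mulVf // pnatr_eq0.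
Qed.

HB.instance Definition _ := Measure.copy unif_nat
  (mscale (NngNum invM_ge0) (msum (fun k => @dirac _ nat k R) M.+1)).
HB.instance Definition _ := Measure_isProbability.Build _ _ _ unif_nat unif_natT.

Lemma integral_unif_nat (g : nat -> \bar R) : (forall x, 0 <= g x) ->
  \int[unif_nat]_x g x = (M.+1%:R^-1)%:E * \sum_(k < M.+1) g k.
Proof.
move=> g0; rewrite ge0_integral_mscale //= ge0_integral_measure_sum //.
by congr (_ * _); apply: eq_bigr => k _; rewrite integral_dirac //= diracT mul1e.
Qed.

Lemma Lnorm_unif_nat (p : R) (g : nat -> \bar R) : (forall x, 0 <= g x) ->
  Lnorm unif_nat p%:E g = ((M.+1%:R^-1)%:E * \sum_(k < M.+1) `|g k| `^ p) `^ p^-1.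
Proof.
by move=> g0; rewrite Lnorm.unlock /= integral_unif_nat // => x; exact: poweR_ge0.
Qed.

End UniformProbability.

Section UniformLnorm.
Context {R : realType} (M : nat) (p : R).

Lemma Lnorm_unif_natEFin (g : nat -> R) : (forall x, 0 <= g x) ->
  Lnorm (unif_nat M) p%:E (fun x => (g x)%:E) =
  ((M.+1%:R^-1 * \sum_(x < M.+1) g x `^ p) `^ p^-1)%:E.
Proof.
move=> g0; rewrite Lnorm_unif_nat // -poweR_EFin; congr (_ `^ _)%E.
rewrite EFinM -sumEFin; congr (_ * _)%E; apply: eq_bigr => x _.
by rewrite gee0_abs ?lee_fin // poweR_EFin.
Qed.

Lemma le_Lnorm_unif_nat (f g : nat -> \bar R) : 0 < p ->
  (forall x, 0 <= f x <= g x)%E ->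
  (Lnorm (unif_nat M) p%:E f <= Lnorm (unif_nat M) p%:E g)%E.
Proof.
move=> p_gt0 fg.
have f0 x : (0 <= f x)%E by case/andP: (fg x).
have g0 x : (0 <= g x)%E by case/andP: (fg x) => /le_trans; apply.
rewrite !Lnorm_unif_nat //.
have pow_ge0 (h : nat -> \bar R) :
    (0 <= (M.+1%:R^-1)%:E * \sum_(k < M.+1) `|h k| `^ p)%E.
  by rewrite mule_ge0 ?lee_fin ?invr_ge0 // sume_ge0 // => k _; exact: poweR_ge0.
apply: gt0_ler_poweR.
- by rewrite invr_ge0 ltW.
- by rewrite in_itv /= leey andbT pow_ge0.
- by rewrite in_itv /= leey andbT pow_ge0.
apply: lee_wpmul2l; first by rewrite lee_fin invr_ge0.
apply: lee_sum => k _.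
apply: gt0_ler_poweR.
- exact: ltW.
- by rewrite in_itv /= leey andbT abse_ge0.
- by rewrite in_itv /= leey andbT abse_ge0.
by rewrite !gee0_abs //; case/andP: (fg k).
Qed.

End UniformLnorm.

(* The values outside {0, ..., M}, a null set for unif_nat M, are irrelevant. *)
Definition rotation (M x : nat) : nat := if x == 0%N then M else x.-1.

Lemma iter_rotation M k x : (k <= x)%N -> iter k (rotation M) x = (x - k)%N.
Proof.
elim: k => [|k IH] kx; first by rewrite subn0.
rewrite iterS IH ?(ltnW kx) // /rotation subnS.
by rewrite ifF // subn_eq0 leqNgt kx.
Qed.

Lemma rotation_preserving {R : realType} M :
  measure_preserving (@unif_nat R M) (rotation M).
Proof.
split=> // A _.
change (@unif_nat R M (rotation M @^-1` A) = @unif_nat R M A).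
rewrite !unif_natE; congr (_ * _)%E.
transitivity (\sum_(k < M.+1) (\d_(rotation M k) A : \bar R))%E.
  by apply: eq_bigr => k _; rewrite !diracE.
by rewrite big_ord_recl big_ord_recr /= addeC; congr (_ + _)%E.
Qed.

Lemma norlund_le_maxfun {R : realType} (a u : nat -> R[i]) (b : nat -> R) M i :
  (forall n, 0 <= b n) -> (forall n, b n.+1 <= b n) ->
  ((cmod (norlund (fun n => a n * (b n)%:C) u i))%:E
     <= maxfun a u (rotation M) i)%E.
Proof.
move=> b0 bdec; have := maxfun_ge0 a u (rotation M) i.
have := wavg_le_maxfun a u (rotation M) ^~ i.
case: (maxfun _ _ _ _) => [m | _ _ | //]; last by rewrite leey.
move=> wavg_le m_ge0; rewrite lee_fin /norlund.
case: ifPn => [_ | Ac]; first by rewrite cmod0 -lee_fin.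
have Apos : 0 < Apart (fun n => a n * (b n)%:C) i.
  by rewrite lt_neqAle eq_sym Ac Apart_ge0.
rewrite cmodM cmodV ger0_cmodC ?Apart_ge0 // ler_pdivrMr //.
have -> : Apart (fun n => a n * (b n)%:C) i = \sum_(k < i.+1) cmod (a k) * b k.
  by apply: eq_bigr => k _; rewrite cmodM ger0_cmodC.
rewrite (reindex_inj rev_ord_inj) /=.
rewrite (eq_bigr (fun k : 'I_i.+1 => (a k * u (i - k)%N) * (b k)%:C)); last first.
  by move=> k _; rewrite subSS subKn 1?mulrAC // -ltnS.
apply: (abel_majorization (x := fun k => a k * u (i - k)%N)
                          (alpha := fun k => cmod (a k))) => // n ni /=.
have -> : \sum_(k < n.+1) a k * u (i - k)%N =
          \sum_(k < n.+1) a k * u (iter k (rotation M) i).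
  by apply: eq_bigr => k _; rewrite iter_rotation // (leq_trans _ ni) // -ltnS.
by apply: cmod_orbit_sum_le; rewrite -lee_fin.
Qed.

Section SequenceNorms.
Context {R : realType} (p : R).
Hypothesis p_gt0 : 0 < p.
Local Notation sum_pow v n := (\sum_(k < n) cmod (v k) `^ p).

Lemma sum_pow_ge0 (v : nat -> R[i]) n : 0 <= sum_pow v n.
Proof. by apply: sumr_ge0 => k _; exact: powR_ge0. Qed.

Lemma sum_pow_widen (v : nat -> R[i]) m n :
  (m <= n)%N -> sum_pow v m <= sum_pow v n.
Proof.
move=> mn; rewrite -!(big_mkord xpredT (fun k => cmod (v k) `^ p)).
rewrite (big_cat_nat (leq0n m) mn) /=.
by rewrite lerDl sumr_ge0 // => k _; exact: powR_ge0.
Qed.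

Lemma sum_pow_support (v : nat -> R[i]) N n :
  (forall k, (N <= k)%N -> v k = 0) -> sum_pow v n <= sum_pow v N.
Proof.
move=> vN; apply: le_trans (sum_pow_widen v (leq_maxl n N)) _.
rewrite -!(big_mkord xpredT (fun k => cmod (v k) `^ p)).
rewrite (big_cat_nat (leq0n N) (leq_maxr n N)) /= [X in _ + X]big1_seq ?addr0 //.
move=> k /andP[_]; rewrite mem_index_iota => /andP[Nk _].
by rewrite vN // cmod0 powR0 ?gt_eqF.
Qed.

Lemma lpnormE (v : nat -> R[i]) :
  lpnorm p v = ((\sum_(k <oo) (cmod (v k) `^ p)%:E) `^ p^-1)%E.
Proof.
rewrite /lpnorm Lnorm_counting //; congr (_ `^ _)%E.
by apply: eq_eseriesr => k _; rewrite /= ger0_norm ?cmod_ge0.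
Qed.

Lemma partial_le_lpnorm (v : nat -> R[i]) n :
  ((sum_pow v n `^ p^-1)%:E <= lpnorm p v)%E.
Proof.
rewrite lpnormE -poweR_EFin; apply: gt0_ler_poweR.
- by rewrite invr_ge0 ltW.
- by rewrite in_itv /= leey andbT lee_fin sum_pow_ge0.
- rewrite in_itv /= leey andbT.
  by apply: nneseries_ge0 => k _ _; rewrite lee_fin powR_ge0.
rewrite -sumEFin -(big_mkord xpredT (fun k => (cmod (v k) `^ p)%:E)).
by apply: nneseries_lim_ge => k _ _; rewrite lee_fin powR_ge0.
Qed.

Lemma lpnorm_le (v : nat -> R[i]) (B : R) : 0 <= B ->
  (forall n, sum_pow v n `^ p^-1 <= B) -> (lpnorm p v <= B%:E)%E.
Proof.
move=> B0 HB.
have sum_le n : sum_pow v n <= B `^ p.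
  rewrite -[leLHS](powRr1 (sum_pow_ge0 v n)) -(mulVf (lt0r_neq0 p_gt0)) powRrM.
  by apply: ge0_ler_powR (HB n); rewrite ?nnegrE ?powR_ge0 ?(ltW p_gt0).
have series_le : (\sum_(k <oo) (cmod (v k) `^ p)%:E <= (B `^ p)%:E)%E.
  have v_ge0 k : (0 <= k)%N -> xpredT k -> (0 <= (cmod (v k) `^ p)%:E)%E.
    by rewrite lee_fin powR_ge0.
  have /ereal_nondecreasing_cvgn/cvg_lim -> // := ereal_nondecreasing_series v_ge0.
  apply: ge_ereal_sup => _ [n _ <-] /=.
  by rewrite big_mkord sumEFin lee_fin.
rewrite lpnormE; apply: le_trans (gt0_ler_poweR _ _ _ series_le) _.
- by rewrite invr_ge0 ltW.
- rewrite in_itv /= leey andbT.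
  by apply: nneseries_ge0 => k _ _; rewrite lee_fin powR_ge0.
- by rewrite in_itv /= leey andbT lee_fin powR_ge0.
by rewrite poweR_EFin -powRrM mulfV ?gt_eqF // powRr1.
Qed.

End SequenceNorms.

Section Transference.
Context {R : realType} (p : R) (a w : nat -> R[i]).
Hypothesis p_gt0 : 0 < p.
Hypothesis norlund_le_maxfun_rotation :
  forall u M i, ((cmod (norlund w u i))%:E <= maxfun a u (rotation M) i)%E.

Lemma partial_norlund_le : good_weight p a ->
  exists2 C : R, 0 <= C & forall u M,
    (\sum_(x < M.+1) cmod (norlund w u x) `^ p) `^ p^-1
      <= C * (\sum_(x < M.+1) cmod (u x) `^ p) `^ p^-1.
Proof.
move=> [C [C_gt0 maximal_ineq]]; exists C => [|u M]; first exact: ltW.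
have u_ge0 x : 0 <= cmod (u x) := cmod_ge0 _.
have u_Lp : in_Lp (unif_nat M) p u.
  by split=> //; rewrite Lnorm_unif_natEFin // ltry.
have := maximal_ineq _ _ _ _ (rotation_preserving M) u u_Lp.
rewrite Lnorm_unif_natEFin //.
have dom x : (0 <= (cmod (norlund w u x))%:E <= maxfun a u (rotation M) x)%E.
  by rewrite lee_fin cmod_ge0 norlund_le_maxfun_rotation.
move/(le_trans (le_Lnorm_unif_nat M p_gt0 dom)).
rewrite (Lnorm_unif_natEFin M p (fun x => cmod_ge0 (norlund w u x))).
rewrite -EFinM lee_fin.
have M_ge0 : 0 <= M.+1%:R^-1 :> R by rewrite invr_ge0.
rewrite !powRM ?sum_pow_ge0 // mulrCA ler_pM2l // powR_gt0 // invr_gt0 ltr0Sn.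
Qed.

Lemma norlund_bounded_transfer : good_weight p a -> norlund_bounded p w.
Proof.
move=> /partial_norlund_le [C C_ge0 partial_le]; exists C => u [N u_supp].
set U := \sum_(x < N) cmod (u x) `^ p.
have UC_ge0 : 0 <= C * U `^ p^-1 by rewrite mulr_ge0 ?powR_ge0.
apply: le_trans (lpnorm_le p_gt0 UC_ge0 _) _ => [n|].
  apply: le_trans (ge0_ler_powR _ _ _ (sum_pow_widen p _ (leqnSn n))) _.
  - by rewrite invr_ge0 ltW.
  - by rewrite nnegrE sum_pow_ge0.
  - by rewrite nnegrE sum_pow_ge0.
  apply: le_trans (partial_le u n) _; rewrite ler_wpM2l //.
  apply: ge0_ler_powR; rewrite ?nnegrE ?sum_pow_ge0 ?invr_ge0 ?(ltW p_gt0) //.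
  exact: sum_pow_support.
by rewrite EFinM lee_wpmul2l ?lee_fin // partial_le_lpnorm.
Qed.

End Transference.

Theorem mainTheorem3 (R : realType) (p : R) (a : nat -> R[i]) :
  1 < p -> good_weight p a ->
  norlund_bounded p a /\
  (forall b : nat -> R,
     (forall n : nat, 0 <= b n) ->
     {homo b : m n / (m <= n)%N >-> n <= m} ->
     norlund_bounded p (fun n : nat => a n * ((b n)%:C)%C)).
Proof.
move=> p_gt1 good; have p_gt0 : 0 < p := lt_trans ltr01 p_gt1.
split=> [|b b_ge0 b_noninc].
  apply: (norlund_bounded_transfer p_gt0 _ good) => u M i.
  have := norlund_le_maxfun a u (b := fun=> 1) M i (fun=> ler01) (fun=> lexx 1).
  by under eq_fun do rewrite mulr1.
apply: (norlund_bounded_transfer p_gt0 _ good) => u M i.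
by apply: norlund_le_maxfun => // n; exact/b_noninc/leqnSn.
Qed.
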